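(* For each $k\in\mathbb{N}$ let $f_{n,k}$ be the number of forkless monomials $\mathfrak{m}\in\mathfrak{M}$ of total degree $k$. Then, as formal power series in $\mathbb{Z}[[t]]$, $$\sum_{k\in\mathbb{N}}f_{n,k}t^k=\frac{(1+0t)(1+1t)\cdots(1+(n-2)t)}{(1-t)^{n-1}}.$$
   Context: Let $n$ be a positive integer and $\mathbb{N}=\{0,1,2,\dots\}$. Let $\mathfrak{M}$ be the set of monomials in the indeterminates $x_{i,j}$, $1\le i<j\le n$. A monomial $\mathfrak{m}\in\mathfrak{M}$ is forkless if there is no triple $1\le i<j<k\le n$ with $x_{i,j}x_{i,k}\mid\mathfrak{m}$. *)

From HB Require Import structures.
From mathcomp Require Import all_boot all_order all_algebra.
Set Implicit Arguments. Unset Strict Implicit. Unset Printing Implicit Defensive.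
Import Order.TTheory GRing.Theory Num.Theory.

(* Indeterminates x_{i,j}, 1 <= i < j <= n, indexed here by pairs (i,j) of
   'I_n (0-based) with i < j. *)
Definition var (n : nat) := {p : 'I_n * 'I_n | (p.1 < p.2)%N}.

(* A monomial of total degree k is an exponent vector e : var n -> nat with
   \sum e = k; every exponent is then <= k, so such monomials are exactly the
   finite functions e : var n -> 'I_k.+1 with \sum e = k. *)
Definition degree (n k : nat) (e : {ffun var n -> 'I_k.+1}) : nat :=
  \sum_(v : var n) (e v : nat).

Definition forkless (n k : nat) (e : {ffun var n -> 'I_k.+1}) : bool :=
  [forall v1 : var n, forall v2 : var n,
     ~~ [&& (val v1).1 == (val v2).1, ((val v1).2 < (val v2).2)%N,
            (0 < e v1)%N & (0 < e v2)%N]].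

Definition f (n k : nat) : nat :=
  #|[set e : {ffun var n -> 'I_k.+1} | (degree e == k) && forkless e]|.

Definition numer (n : nat) : {poly int} :=
  \prod_(m < n.-1) (1 + (m%:Z) *: 'X).

Definition denom (n : nat) : {poly int} := (1 - 'X) ^+ n.-1.

From HB Require Import structures.
From mathcomp Require Import all_boot all_order all_algebra.
From mathcomp Require Import ring.
Import Order.TTheory GRing.Theory Num.Theory.
Local Open Scope ring_scope.

(* A forkless monomial is a choice, independently for every row i, of either
   no variable x_{i,j} at all or a single variable x_{i,j}, j > i, with a
   positive exponent.  Hence sum_k f_{n,k} t^k = prod_i (1 + (n-1-i) t/(1-t)).
   Multiplying by (1-t)^(n-1), the factor of row i < n-1 becomes
   1 + (n-2-i) t, and that of the last row is 1.  To stay within polynomials,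
   t/(1-t) is replaced by t + ... + t^K, which changes no coefficient of
   degree at most K. *)

Definition agree_upto {R : nzSemiRingType} (m : nat) (p q : {poly R}) :=
  forall i, (i < m)%N -> p`_i = q`_i.

Lemma agree_uptoM (R : nzSemiRingType) m (p p' q q' : {poly R}) :
  agree_upto m p p' -> agree_upto m q q' -> agree_upto m (p * q) (p' * q').
Proof.
move=> agree_p agree_q i lt_im; rewrite !coefM; apply: eq_bigr => j _.
rewrite agree_p ?agree_q //; first exact: leq_ltn_trans (leq_subr _ _) lt_im.
exact: leq_trans (ltn_ord j) _.
Qed.

Lemma agree_upto_prod (R : nzSemiRingType) m N (F G : 'I_N -> {poly R}) :
  (forall i, agree_upto m (F i) (G i)) ->
  agree_upto m (\prod_i F i) (\prod_i G i).
Proof. by move=> agreeFG; apply: big_ind2 => // *; apply: agree_uptoM. Qed.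

Definition trunc_geom (R : nzSemiRingType) (K : nat) : {poly R} :=
  \sum_(d < K) 'X^(d.+1).
Arguments trunc_geom {R}.

Lemma coef_trunc_geom (R : nzSemiRingType) K i :
  (trunc_geom K : {poly R})`_i = ((0 < i)%N && (i <= K)%N)%:R.
Proof.
elim: K => [|K IH]; first by rewrite /trunc_geom big_ord0 coef0; case: i.
rewrite /trunc_geom big_ord_recr /= coefD -/(trunc_geom K) IH coefXn.
case: i {IH} => [|i] /=; first by rewrite addr0.
by rewrite eqSS ltnS; case: ltngtP; rewrite ?addr0 ?add0r.
Qed.

Lemma trunc_geom_mul1subX (R : comNzRingType) K :
  (1 - 'X) * trunc_geom K = 'X - 'X^(K.+1) :> {poly R}.
Proof.
elim: K => [|K IH]; first by rewrite /trunc_geom big_ord0 mulr0 expr1 subrr.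
rewrite /trunc_geom big_ord_recr /= mulrDr -/(trunc_geom K) IH !exprS; ring.
Qed.

Lemma row_factor_mul1subX (R : comNzRingType) K c :
  (1 - 'X) * (1 + trunc_geom K *+ c.+1)
  = 1 + 'X *+ c - 'X^(K.+1) *+ c.+1 :> {poly R}.
Proof. by rewrite mulrDr mulr1 mulrnAr trunc_geom_mul1subX mulrnBl mulrSr; ring. Qed.

Definition forkless_gf (R : nzSemiRingType) (n K : nat) : {poly R} :=
  \prod_(i < n) (1 + trunc_geom K *+ (n - i.+1)).
Arguments forkless_gf {R}.

Lemma coef_forkless_gf_trunc (R : comNzRingType) n m K : (m <= K)%N ->
  (forkless_gf n K : {poly R})`_m = (forkless_gf n m)`_m.
Proof.
move=> le_mK.
suff: agree_upto m.+1 (forkless_gf n K : {poly R}) (forkless_gf n m) by apply.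
apply: agree_upto_prod => i j; rewrite ltnS => le_jm.
by rewrite !coefD !coefMn !coef_trunc_geom le_jm (leq_trans le_jm le_mK).
Qed.

Lemma card_ord_gt n (i : 'I_n) : #|[pred j : 'I_n | (i < j)%N]| = (n - i.+1)%N.
Proof.
rewrite cardE /enum_mem -enumT /= -(size_map val) -filter_map val_enum_ord.
rewrite -[n in iota 0 n](subnKC (ltn_ord i)) iotaD filter_cat add0n.
rewrite (eq_in_filter (a2 := pred0)) => [|j]; last first.
  by rewrite mem_iota ltnS => /andP[_ ji]; apply/negbTE; rewrite -leqNgt.
rewrite filter_pred0 (eq_in_filter (a2 := predT)) => [|j]; last first.
  by rewrite mem_iota => /andP[].
by rewrite filter_predT size_iota.
Qed.

(* Row i of a forkless monomial is encoded by a pair (j, d): the variable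
   x_{i,j}, j > i, with exponent d > 0, or the dummy pair (i, 0) when row i
   carries no variable. *)
Definition row_choice {n K : nat} (i : 'I_n) (p : 'I_n * 'I_K.+1) : bool :=
  if p.2 == ord0 then p.1 == i else (i < p.1)%N.

Lemma row_choice_sum (R : nzSemiRingType) n K (i : 'I_n) :
  \sum_(p : 'I_n * 'I_K.+1 | row_choice i p) 'X^(p.2)
  = 1 + trunc_geom K *+ (n - i.+1) :> {poly R}.
Proof.
rewrite (bigID (fun p => p.2 == ord0)) /= (big_pred1 (i, ord0)); last first.
  move=> [j d]; rewrite /row_choice /= xpair_eqE.
  by case: (d == ord0); rewrite ?andbT ?andbF.
rewrite expr0; congr (_ + _).
rewrite (eq_bigl (fun p : 'I_n * 'I_K.+1 => (i < p.1)%N && (p.2 != ord0))); last first.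
  by move=> [j d]; rewrite /row_choice /=; case: (d == ord0); rewrite ?andbT ?andbF.
rewrite -(pair_big_dep (fun j : 'I_n => (i < j)%N) (fun _ d => d != ord0)
                       (fun _ (d : 'I_K.+1) => 'X^d : {poly R})) /=.
have trunc_geomE : \sum_(d : 'I_K.+1 | d != ord0) 'X^d = trunc_geom K :> {poly R}.
  by rewrite big_mkcond big_ord_recl /= add0r; apply: eq_bigr.
rewrite (eq_bigr (fun _ => trunc_geom K)) => [|j _]; last exact: trunc_geomE.
by rewrite sumr_const card_ord_gt.
Qed.

Section RowChoices.
Variables n K : nat.
Local Notation choice := {ffun 'I_n -> 'I_n * 'I_K.+1}.
Local Notation monomial := {ffun var n -> 'I_K.+1}.
Local Notation row_choices := (family (@row_choice n K)).

Definition choice_degree (g : choice) : nat := \sum_i ((g i).2 : nat).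

Definition monomial_of_choice (g : choice) : monomial :=
  [ffun v => if (g (val v).1).1 == (val v).2 then (g (val v).1).2 else ord0].

Definition choice_of_monomial (e : monomial) : choice :=
  [ffun i => if [pick v : var n | ((val v).1 == i) && (0 < e v)%N] is Some v
             then ((val v).2, e v) else (i, ord0)].

Lemma row_choicesP {g : choice} i : g \in row_choices -> row_choice i (g i).
Proof. by move/familyP; apply. Qed.

Lemma row_choice0 {g : choice} {i} :
  g \in row_choices -> (g i).2 = ord0 -> g i = (i, ord0).
Proof.
move=> /(row_choicesP i); rewrite /row_choice => + g_i2; rewrite g_i2 eqxx.
by move/eqP => g_i1; rewrite [g i]surjective_pairing g_i1 g_i2.
Qed.

Lemma row_choice_gt {g : choice} {i} :
  g \in row_choices -> (g i).2 != ord0 -> (i < (g i).1)%N.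
Proof. by move=> /(row_choicesP i) + nz_g_i2; rewrite /row_choice (negbTE nz_g_i2). Qed.

Lemma degree_monomial_of_choice (g : choice) :
  g \in row_choices -> degree (monomial_of_choice g) = choice_degree g.
Proof.
move=> gP; rewrite /degree /choice_degree.
rewrite (partition_big (fun v : var n => (val v).1) predT) //.
apply: eq_bigr => i _.
have [g_i2|nz_g_i2] := eqVneq (g i).2 ord0.
  rewrite g_i2 big1 // => v /eqP v_i; rewrite ffunE v_i.
  by case: ifP => // _; rewrite g_i2.
pose v0 : var n := exist _ (i, (g i).1) (row_choice_gt gP nz_g_i2).
rewrite (bigD1 v0) //= ffunE /= eqxx big1 ?addn0 // => v /andP[/eqP v_i ne_v].
rewrite ffunE v_i; case: eqP => // g_i1; case/eqP: ne_v; apply: val_inj => /=.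
by rewrite g_i1 -v_i -surjective_pairing.
Qed.

Lemma forkless_monomial_of_choice (g : choice) : forkless (monomial_of_choice g).
Proof.
apply/forallP => v1; apply/forallP => v2.
apply/negP => /and4P[/eqP eq_rows lt_cols].
rewrite !ffunE; case: eqP => [g_v1|]; last by rewrite ltnn.
case: eqP => [g_v2|]; last by rewrite ltnn.
by move: lt_cols; rewrite -g_v1 -g_v2 eq_rows ltnn.
Qed.

Lemma monomial_of_choice_row {g1 g2 : choice} {i} :
  g1 \in row_choices -> (g1 i).2 != ord0 ->
  monomial_of_choice g1 = monomial_of_choice g2 -> g2 i = g1 i.
Proof.
move=> g1P nz_g1_i2 eq_g12.
pose v0 : var n := exist _ (i, (g1 i).1) (row_choice_gt g1P nz_g1_i2).
have := congr1 (fun e : monomial => e v0) eq_g12; rewrite !ffunE /= eqxx.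
case: eqP => [g2_i1 g12_i2|_ g1_i2]; last by case/negP: (nz_g1_i2); rewrite g1_i2.
by rewrite [g2 i]surjective_pairing g2_i1 -g12_i2 -surjective_pairing.
Qed.

Lemma monomial_of_choice_inj : {in row_choices &, injective monomial_of_choice}.
Proof.
move=> g1 g2 g1P g2P eq_g12; apply/ffunP => i.
have [g1_i2|nz_g1_i2] := eqVneq (g1 i).2 ord0; last first.
  by rewrite (monomial_of_choice_row g1P nz_g1_i2 eq_g12).
have [g2_i2|nz_g2_i2] := eqVneq (g2 i).2 ord0; last first.
  by rewrite (monomial_of_choice_row g2P nz_g2_i2 (esym eq_g12)).
by rewrite (row_choice0 g1P g1_i2) (row_choice0 g2P g2_i2).
Qed.

Lemma choice_of_monomialP (e : monomial) : choice_of_monomial e \in row_choices.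
Proof.
apply/familyP => i; rewrite ffunE unfold_in /row_choice.
case: pickP => [v /andP[/eqP v_i e_v_gt0]|_] /=; last by rewrite !eqxx.
have -> : (e v == ord0) = false by apply/negbTE; rewrite -lt0n.
by rewrite -v_i; case: v {v_i e_v_gt0}.
Qed.

(* Forklessness is exactly what makes the variable of each row unique. *)
Lemma choice_of_monomialK (e : monomial) :
  forkless e -> monomial_of_choice (choice_of_monomial e) = e.
Proof.
move=> /forallP e_forkless; apply/ffunP => v; rewrite !ffunE.
case: pickP => [w /andP[/eqP w_row e_w_gt0]|no_var] /=; last first.
  move/negbT: (no_var v); rewrite eqxx -eqn0Ngt => /eqP e_v0.
  by case: eqP => _; apply: val_inj; rewrite /= e_v0.
case: eqP => [w_col|ne_cols].
  suff -> : w = v by [].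
  apply: val_inj; rewrite [val w]surjective_pairing [val v]surjective_pairing.
  by rewrite w_row w_col.
apply: val_inj => /=; apply/esym/eqP; rewrite eqn0Ngt; apply/negP => e_v_gt0.
case: (ltngtP (val w).2 (val v).2) => [lt_wv|lt_vw|eq_wv].
- by move/forallP/(_ v): (e_forkless w); rewrite w_row eqxx lt_wv e_w_gt0 e_v_gt0.
- by move/forallP/(_ w): (e_forkless v); rewrite w_row eqxx lt_vw e_w_gt0 e_v_gt0.
- by case: ne_cols; apply: val_inj.
Qed.

Lemma card_forkless_choices m :
  #|[set e : monomial | (degree e == m) && forkless e]| =
  #|[set g : choice | (g \in row_choices) && (choice_degree g == m)]|.
Proof.
rewrite -(card_in_imset (f := monomial_of_choice)); last first.
  move=> g1 g2; rewrite !inE => /andP[g1P _] /andP[g2P _].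
  exact: monomial_of_choice_inj.
apply: eq_card => e; rewrite inE; apply/idP/imsetP => [/andP[deg_e e_forkless]|].
  exists (choice_of_monomial e); last by rewrite choice_of_monomialK.
  rewrite inE choice_of_monomialP -degree_monomial_of_choice ?choice_of_monomialP //.
  by rewrite choice_of_monomialK.
case=> g; rewrite inE => /andP[gP /eqP deg_g] ->.
by rewrite degree_monomial_of_choice // deg_g eqxx forkless_monomial_of_choice.
Qed.
End RowChoices.

Lemma coef_forkless_gf (R : comNzRingType) n m :
  (f n m)%:R = (forkless_gf n m : {poly R})`_m.
Proof.
rewrite /f card_forkless_choices /forkless_gf.
rewrite (eq_bigr (fun i => \sum_(p : 'I_n * 'I_m.+1 | row_choice i p) 'X^(p.2)))
  => [|i _]; last by rewrite row_choice_sum.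
rewrite bigA_distr_big_dep coef_sum.
rewrite (eq_bigr (fun g => (choice_degree n m g == m)%:R)) => [|g _]; last first.
  by rewrite prodrXr coefXn eq_sym.
rewrite -natr_sum -sum1_card big_mkcond [in RHS]big_mkcond /=; congr _%:R.
by apply: eq_bigr => g _; rewrite inE; case: (g \in _); case: (_ == m).
Qed.

Lemma denom_mul_forkless_gf n K :
  agree_upto K.+1 (denom n * forkless_gf n K) (numer n).
Proof.
case: n => [|n]; first by rewrite /denom /numer /forkless_gf !big_ord0 mulr1.
rewrite /denom /forkless_gf /numer big_ord_recr /= subnn mulr0n addr0 mulr1.
rewrite -[n in _ ^+ n]card_ord -prodr_const -big_split (reindex_inj rev_ord_inj) /=.
apply: agree_upto_prod => i j lt_jK.
rewrite subSS subKn // row_factor_mul1subX -natz scaler_nat coefB coefMn coefXn.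
by rewrite (ltn_eqF lt_jK) mul0rn subr0.
Qed.

Theorem proposition4p13 (n : nat) (hn : (0 < n)%N) (k : nat) :
  \sum_(i < k.+1) (denom n)`_i * ((f n (k - i))%:Z) = (numer n)`_k.
Proof.
rewrite (eq_bigr (fun i : 'I_k.+1 => (denom n)`_i * (forkless_gf n k)`_(k - i))).
  by rewrite -coefM denom_mul_forkless_gf.
by move=> i _; rewrite -natz coef_forkless_gf coef_forkless_gf_trunc // leq_subr.
Qed.
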